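(* Let $M$ be a regular $po$-$\Gamma$-semigroup. Then every fuzzy right ideal and every fuzzy left ideal $f$ of $M$ is idempotent, i.e. $f\circ f=f$.
   Context: Let $M$ and $\Gamma$ be nonempty sets with a map $M\times\Gamma\times M\to M$, $(a,\gamma,b)\mapsto a\gamma b$, satisfying $(a\gamma b)\mu c=a\gamma(b\mu c)$ for all $a,b,c\in M$, $\gamma,\mu\in\Gamma$. A $po$-$\Gamma$-semigroup is such an $M$ with a partial order $\le$ such that $a\le b$ implies $a\gamma c\le b\gamma c$ and $c\gamma a\le c\gamma b$ for all $c\in M$, $\gamma\in\Gamma$. For $H\subseteq M$, $(H]=\{t\in M: t\le h \text{ for some } h\in H\}$; $a\Gamma M\Gamma a=\{a\gamma x\mu a: x\in M,\gamma,\mu\in\Gamma\}$. $M$ is regular if $a\in(a\Gamma M\Gamma a]$ for every $a\in M$. A fuzzy subset of $M$ is a map $M\to[0,1]$. For $a\in M$ let $A_a=\{(y,z)\in M\times M: a\le y\gamma z \text{ for some }\gamma\in\Gamma\}$. $(f\circ g)(a)=\bigvee_{(y,z)\in A_a}\min\{f(y),g(z)\}$ if $A_a\ne\emptyset$, and $0$ otherwise. A fuzzy right (resp. left) ideal is a fuzzy subset $f$ with $f(x\gamma y)\ge f(x)$ (resp. $f(x\gamma y)\ge f(y)$) for all $x,y\in M,\gamma\in\Gamma$, and $x\le y\Rightarrow f(x)\ge f(y)$. *)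

From Stdlib Require Import Reals ClassicalEpsilon.
From Coquelicot Require Import Coquelicot.
Open Scope R_scope.
Set Implicit Arguments.
Unset Strict Implicit.

Section Defs.
Variables (M Gamma : Type) (op : M -> Gamma -> M -> M) (le : M -> M -> Prop).

Record is_po_gamma_semigroup : Prop := {
  pgs_M_nonempty : inhabited M;
  pgs_Gamma_nonempty : inhabited Gamma;
  pgs_assoc : forall a b c (g m : Gamma), op (op a g b) m c = op a g (op b m c);
  pgs_refl : forall a, le a a;
  pgs_antisym : forall a b, le a b -> le b a -> a = b;
  pgs_trans : forall a b c, le a b -> le b c -> le a c;
  pgs_compat_r : forall a b c (g : Gamma), le a b -> le (op a g c) (op b g c);
  pgs_compat_l : forall a b c (g : Gamma), le a b -> le (op c g a) (op c g b)
}.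

(* a ∈ (aΓMΓa] for every a *)
Definition regular : Prop :=
  forall a : M, exists (x : M) (g m : Gamma), le a (op (op a g x) m a).

Definition fuzzy_subset (f : M -> R) : Prop := forall x, 0 <= f x <= 1.

Definition A_set (a : M) (p : M * M) : Prop :=
  exists g : Gamma, le a (op (fst p) g (snd p)).

Definition fuzzy_comp (f h : M -> R) (a : M) : R :=
  if excluded_middle_informative (exists p, A_set a p)
  then real (Lub_Rbar (fun r => exists p, A_set a p /\ r = Rmin (f (fst p)) (h (snd p))))
  else 0.

Definition fuzzy_right_ideal (f : M -> R) : Prop :=
  fuzzy_subset f /\
  (forall x y (g : Gamma), f (op x g y) >= f x) /\
  (forall x y, le x y -> f x >= f y).

Definition fuzzy_left_ideal (f : M -> R) : Prop :=
  fuzzy_subset f /\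
  (forall x y (g : Gamma), f (op x g y) >= f y) /\
  (forall x y, le x y -> f x >= f y).

End Defs.

(* For a fuzzy right ideal f and (y, z) in A_a we have f a >= f (y γ z) >= f y, so
   f a bounds the supremum defining (f ∘ f)(a).  Regularity, a <= (a γ x) μ a, provides
   the pair (a γ x, a) in A_a at which the bound f a is attained; for left ideals the
   pair (a, x μ a) plays the same role, by associativity. *)
From Stdlib Require Import Reals Lra FunctionalExtensionality ClassicalEpsilon.
From Coquelicot Require Import Coquelicot.
Open Scope R_scope.
Set Implicit Arguments.

Lemma Lub_Rbar_max (E : R -> Prop) (v : R) :
  E v -> (forall r, E r -> r <= v) -> real (Lub_Rbar E) = v.
Proof.
  intros Ev v_ub.
  rewrite (is_lub_Rbar_unique E (Finite v)); [reflexivity|].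
  split.
  - intros r Er; exact (v_ub r Er).
  - intros b b_ub; exact (b_ub v Ev).
Qed.

Section FuzzyComposition.
Variables (M Gamma : Type) (op : M -> Gamma -> M -> M) (le : M -> M -> Prop).

Lemma fuzzy_comp_max (f h : M -> R) (a : M) (p : M * M) :
  A_set op le a p ->
  (forall q, A_set op le a q -> Rmin (f (fst q)) (h (snd q)) <= Rmin (f (fst p)) (h (snd p))) ->
  fuzzy_comp op le f h a = Rmin (f (fst p)) (h (snd p)).
Proof.
  intros Ap p_max; unfold fuzzy_comp.
  destruct (excluded_middle_informative _) as [_ | A_empty].
  - apply Lub_Rbar_max; [now exists p |].
    intros r [q [Aq ->]]; exact (p_max q Aq).
  - exfalso; apply A_empty; now exists p.
Qed.

Lemma fuzzy_right_ideal_A_set_le (f : M -> R) (a : M) (q : M * M) :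
  fuzzy_right_ideal op le f -> A_set op le a q -> f (fst q) <= f a.
Proof.
  intros [_ [f_right f_anti]] [g a_le].
  specialize (f_right (fst q) (snd q) g); specialize (f_anti _ _ a_le); lra.
Qed.

Lemma fuzzy_left_ideal_A_set_le (f : M -> R) (a : M) (q : M * M) :
  fuzzy_left_ideal op le f -> A_set op le a q -> f (snd q) <= f a.
Proof.
  intros [_ [f_left f_anti]] [g a_le].
  specialize (f_left (fst q) (snd q) g); specialize (f_anti _ _ a_le); lra.
Qed.

Lemma fuzzy_comp_self_eq (f : M -> R) (a : M) (p : M * M) :
  A_set op le a p -> Rmin (f (fst p)) (f (snd p)) = f a ->
  (forall q, A_set op le a q -> Rmin (f (fst q)) (f (snd q)) <= f a) ->
  fuzzy_comp op le f f a = f a.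
Proof.
  intros Ap p_attains fa_ub; rewrite <- p_attains.
  apply fuzzy_comp_max; [exact Ap |].
  now rewrite p_attains.
Qed.

Theorem fuzzy_right_ideal_idempotent (f : M -> R) :
  regular op le -> fuzzy_right_ideal op le f -> fuzzy_comp op le f f = f.
Proof.
  intros M_regular f_ideal; apply functional_extensionality; intros a.
  destruct (M_regular a) as [x [g [m a_le]]].
  apply fuzzy_comp_self_eq with (p := (op a g x, a)).
  - now exists m.
  - apply Rmin_right; simpl.
    destruct f_ideal as [_ [f_right _]]; specialize (f_right a x g); lra.
  - intros q Aq.
    pose proof (fuzzy_right_ideal_A_set_le f_ideal Aq).
    pose proof (Rmin_l (f (fst q)) (f (snd q))); lra.
Qed.

Theorem fuzzy_left_ideal_idempotent (f : M -> R) :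
  (forall a b c (g m : Gamma), op (op a g b) m c = op a g (op b m c)) ->
  regular op le -> fuzzy_left_ideal op le f -> fuzzy_comp op le f f = f.
Proof.
  intros op_assoc M_regular f_ideal; apply functional_extensionality; intros a.
  destruct (M_regular a) as [x [g [m a_le]]].
  apply fuzzy_comp_self_eq with (p := (a, op x m a)).
  - exists g; simpl; now rewrite <- op_assoc.
  - apply Rmin_left; simpl.
    destruct f_ideal as [_ [f_left _]]; specialize (f_left x a m); lra.
  - intros q Aq.
    pose proof (fuzzy_left_ideal_A_set_le f_ideal Aq).
    pose proof (Rmin_r (f (fst q)) (f (snd q))); lra.
Qed.

End FuzzyComposition.

Theorem corollary31 (M Gamma : Type) (op : M -> Gamma -> M -> M) (le : M -> M -> Prop) :
  is_po_gamma_semigroup op le ->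
  regular op le ->
  (forall f : M -> R, fuzzy_right_ideal op le f -> fuzzy_comp op le f f = f) /\
  (forall f : M -> R, fuzzy_left_ideal op le f -> fuzzy_comp op le f f = f).
Proof.
  intros M_po M_regular; split.
  - intros f; exact (fuzzy_right_ideal_idempotent M_regular).
  - intros f; exact (fuzzy_left_ideal_idempotent (pgs_assoc M_po) M_regular).
Qed.
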